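(* Consider the Task Scheduling Game defined in the context. Let $\mathbf{s}^*=(\mathbf{s}_1^*,\dots,\mathbf{s}_N^* )$ be any maximizer of $$\Phi(\mathbf{s}) = \sum_{k \in \mathcal{S}} \sum_{m=1}^{M_k(\mathbf{s})} \frac{V_k}{m} - \sum_{i \in \mathcal{N}} c_i^{\mathrm{ex}}(\mathbf{s}_i) - \sum_{i\in\mathcal{N}} c_i^{\mathrm{tr}}(\mathbf{s}_i)$$ over all strategy profiles $\mathbf{s}$ in which every $\mathbf{s}_i$ is feasible. Then $\mathbf{s}^*$ is a Nash equilibrium; in particular the game has at least one Nash equilibrium.
   Context: Task Scheduling Game. There is a finite set of users $\mathcal{N}=\{1,\dots,N\}$ and a finite set of tasks $\mathcal{S}=\{1,\dots,S\}$. Each task $k$ has a reward $V_k\in\mathbb{R}$, a target location $L_k$ (a point in the plane), and a valid time period $[T_k^{\dagger},T_k^{\ddagger}]$. Each user $i$ has an initial location $L_i$, a travelling speed $R_i>0$, a travelling cost per unit distance $\widetilde C_i\ge0$, a resource budget $C_i\ge 0$, and for each available task $k\in\mathcal{S}_i\subseteq\mathcal{S}$ an execution time $T_{i,k}\ge0$ and execution cost $C_{i,k}\ge 0$. A strategy of user $i$ is an ordered set $\mathbf{s}_i=\{k_i^1,\dots,k_i^{|\mathbf{s}_i|}\}$ of distinct tasks from $\mathcal{S}_i$. Let $D(a,b)=|L_a-L_b|$ denote the distance between locations, with $D(i,k)$ the distance from user $i$'s initial location to task $k$. The strategy $\mathbf{s}_i$ is feasible if (1) $\sum_{k\in\mathbf{s}_i}C_{i,k}\le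 C_i$, and (2) there exist times $T_i^1,\dots,T_i^{|\mathbf{s}_i|}$ with $T_{k_i^j}^{\dagger}\le T_i^j\le T_{k_i^j}^{\ddagger}$ for all $j$, $T_i^1\ge D(i,k_i^1)/R_i$, and $T_i^j\ge T_i^{j-1}+T_{i,k_i^{j-1}}+D(k_i^{j-1},k_i^j)/R_i$ for $j=2,\dots,|\mathbf{s}_i|$. For a profile $\mathbf{s}$, $M_k(\mathbf{s})=\sum_{i\in\mathcal{N}}\mathbf{1}_{(k\in\mathbf{s}_i)}$. Execution cost: $c_i^{\mathrm{ex}}(\mathbf{s}_i)=\sum_{k\in\mathbf{s}_i}C_{i,k}$; travelling cost: $c_i^{\mathrm{tr}}(\mathbf{s}_i)=\sum_{j=1}^{|\mathbf{s}_i|}D(k_i^{j-1},k_i^j)\widetilde C_i$, where $k_i^0$ denotes user $i$'s initial location. Payoff: $u_i(\mathbf{s}_i,\mathbf{s}_{-i})=\sum_{k\in\mathbf{s}_i}V_k/M_k(\mathbf{s})-c_i^{\mathrm{ex}}(\mathbf{s}_i)-c_i^{\mathrm{tr}}(\mathbf{s}_i)$. A profile $\mathbf{s}^*$ of feasible strategies is a Nash equilibrium if for every user $i$, $\mathbf{s}_i^*$ maximizes $u_i(\mathbf{s}_i,\mathbf{s}_{-i}^* )$ over all feasible strategies $\mathbf{s}_i$ of user $i$. *)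

From HB Require Import structures.
From mathcomp Require Import all_boot all_order all_algebra.
Set Implicit Arguments. Unset Strict Implicit. Unset Printing Implicit Defensive.
Import Order.TTheory GRing.Theory Num.Theory.
Local Open Scope ring_scope.

Definition point (R : rcfType) := (R * R)%type.

Definition dist (R : rcfType) (a b : point R) : R :=
  Num.sqrt ((a.1 - b.1) ^+ 2 + (a.2 - b.2) ^+ 2).

Record game (R : rcfType) (U T : finType) := Game {
  V : T -> R;
  Ltask : T -> point R;
  Tstart : T -> R;
  Tend : T -> R;
  Luser : U -> point R;
  speed : U -> R;
  ctrav : U -> R;
  budget : U -> R;
  avail : U -> {set T};
  texec : U -> T -> R;
  cexec : U -> T -> R
}.

Section Game.
Variables (R : rcfType) (U T : finType) (G : game R U T).

Definition strategy := seq T.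
Definition profile := U -> strategy.

(* location of k_i^{j}, for j = 0..|s|, where k_i^0 is L_i *)
Definition loc_at (i : U) (s : strategy) (j : nat) : point R :=
  nth (Luser G i) (Luser G i :: map (Ltask G) s) j.

(* j-th entry (0-based) of a sequence of reals; only used for j < size *)
Definition at0 (xs : seq R) (j : nat) : R := nth 0 xs j.

(* feasibility: distinct available tasks (s ⊆ S_i), budget (1), and
   existence of times T_i^1..T_i^|s| (stored 0-based as tm 0 .. tm (|s|-1)) (2) *)
Definition feasible (i : U) (s : strategy) : Prop :=
  [/\ uniq s, all (fun k => k \in avail G i) s,
      \sum_(k <- s) cexec G i k <= budget G i &
      exists tm : nat -> R,
        [/\ (forall j, (j < size s)%N ->
               at0 (map (Tstart G) s) j <= tm j <= at0 (map (Tend G) s) j),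
            (0 < size s)%N -> dist (Luser G i) (loc_at i s 1) / speed G i <= tm 0%N &
            (forall j, (0 < j)%N -> (j < size s)%N ->
               tm j.-1 + at0 (map (texec G i) s) j.-1
                 + dist (loc_at i s j) (loc_at i s j.+1) / speed G i <= tm j)]].

Definition Mk (s : profile) (k : T) : nat := #|[set j : U | k \in s j]|.

Definition cost_ex (i : U) (si : strategy) : R := \sum_(k <- si) cexec G i k.

Definition cost_tr (i : U) (si : strategy) : R :=
  \sum_(j < size si) dist (loc_at i si j) (loc_at i si j.+1) * ctrav G i.

Definition payoff (i : U) (s : profile) : R :=
  \sum_(k <- s i) V G k / (Mk s k)%:R - cost_ex i (s i) - cost_tr i (s i).

Definition upd (s : profile) (i : U) (si : strategy) : profile :=
  fun j => if j == i then si else s j.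

Definition feasible_profile (s : profile) : Prop := forall i, feasible i (s i).

Definition nash (s : profile) : Prop :=
  feasible_profile s /\
  forall i (si : strategy), feasible i si -> payoff i (upd s i si) <= payoff i s.

Definition potential (s : profile) : R :=
  \sum_(k : T) \sum_(1 <= m < (Mk s k).+1) V G k / m%:R
  - \sum_(i : U) cost_ex i (s i) - \sum_(i : U) cost_tr i (s i).

End Game.

(** Rosenthal's argument: the potential is the sum over tasks of the partial
    harmonic sums [V_k (1 + 1/2 + ... + 1/M_k)] minus all costs.  When user [i]
    alone changes strategy, the terms of the other users and the first
    [M_k - 1] harmonic terms of every task do not move, and what changes is
    exactly [i]'s payoff [sum_(k in s_i) V_k / M_k - costs].  Hence the
    potential is exact, a maximiser admits no profitable deviation, and a maximiser exists
    because feasible strategies are duplicate-free, so there are finitely many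
    feasible profiles, among them the empty one. *)
From Stdlib Require Import ClassicalEpsilon FunctionalExtensionality.
From mathcomp Require Import all_boot all_order all_algebra.
From mathcomp Require Import lra.
Set Implicit Arguments. Unset Strict Implicit. Unset Printing Implicit Defensive.
Import Order.TTheory GRing.Theory Num.Theory.
Local Open Scope ring_scope.

Lemma ex_maximizer_fin_image (d : Order.disp_t) (O : orderType d)
    (X : finType) (Y : Type) (f : X -> Y) (P : Y -> Prop) (g : Y -> O) :
  (exists y, P y) -> (forall y, P y -> exists x, f x = y) ->
  exists2 y, P y & forall z, P z -> (g z <= g y)%O.
Proof.
move=> [y0 Py0] onto; have [x0 fx0] := onto y0 Py0.
pose Pb x : bool := excluded_middle_informative (P (f x)).
have PbP x : reflect (P (f x)) (Pb x).
  by rewrite /Pb; case: excluded_middle_informative => h; constructor.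
have Pbx0 : Pb x0 by apply/PbP; rewrite fx0.
case: (arg_maxP (g \o f) Pbx0) => x /PbP Px xmax.
exists (f x) => // z /[dup] Pz /onto [z' fz']; rewrite -fz'.
by apply: xmax; apply/PbP; rewrite fz'.
Qed.

Lemma harmonic_sum_addn (R : fieldType) (v : R) (a : nat) (b : bool) :
  \sum_(1 <= m < (b + a).+1) v / m%:R =
  \sum_(1 <= m < a.+1) v / m%:R + (if b then v / a.+1%:R else 0).
Proof. by case: b; [rewrite add1n big_nat_recr | rewrite addr0]. Qed.

Section PotentialGame.
Variables (R : rcfType) (U T : finType) (G : game R U T).
Implicit Types (s : profile U T) (i : U) (si : strategy T) (k : T).

Definition Mk_other s i k : nat := #|[set j : U | (j != i) && (k \in s j)]|.

Lemma Mk_split s i k : Mk s k = ((k \in s i) + Mk_other s i k)%N.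
Proof.
rewrite /Mk (cardsD1 i) inE; congr (_ + _)%N.
by apply: eq_card => j; rewrite !inE.
Qed.

Lemma Mk_other_upd s i si k : Mk_other (upd s i si) i k = Mk_other s i k.
Proof. by apply: eq_card => j; rewrite !inE /upd; case: eqP. Qed.

Definition potential_other s i : R :=
  \sum_k \sum_(1 <= m < (Mk_other s i k).+1) V G k / m%:R
  - \sum_(j | j != i) cost_ex G j (s j) - \sum_(j | j != i) cost_tr G j (s j).

Lemma potential_other_upd s i si :
  potential_other (upd s i si) i = potential_other s i.
Proof.
rewrite /potential_other; under eq_bigr => k _ do rewrite Mk_other_upd.
by congr (_ - _ - _); apply: eq_bigr => j /negPf ji; rewrite /upd ji.
Qed.

Lemma reward_sum_split s i : uniq (s i) ->
  \sum_(k <- s i) V G k / (Mk s k)%:R =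
  \sum_k (if k \in s i then V G k / (Mk_other s i k).+1%:R else 0).
Proof.
move=> si_uniq; rewrite big_uniq // big_mkcond; apply: eq_bigr => k _.
by case: ifP => // ksi; rewrite (Mk_split s i) ksi add1n.
Qed.

Lemma potential_split s i : uniq (s i) ->
  potential G s = potential_other s i + payoff G i s.
Proof.
move=> si_uniq; rewrite /potential /potential_other /payoff.
rewrite (bigD1 i (F := fun j => cost_ex G j (s j))) //=.
rewrite (bigD1 i (F := fun j => cost_tr G j (s j))) //= reward_sum_split //.
under eq_bigr => k _ do rewrite (Mk_split s i) harmonic_sum_addn.
rewrite big_split /=; lra.
Qed.

Lemma potential_upd_subr s i si : uniq (s i) -> uniq si ->
  potential G (upd s i si) - potential G s =
  payoff G i (upd s i si) - payoff G i s.
Proof.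
move=> si_uniq si'_uniq; have upd_uniq : uniq (upd s i si i) by rewrite /upd eqxx.
rewrite (potential_split upd_uniq) (potential_split si_uniq) potential_other_upd.
lra.
Qed.

Lemma feasible_profile_upd s i si :
  feasible_profile G s -> feasible G i si -> feasible_profile G (upd s i si).
Proof. by move=> fs fsi j; rewrite /upd; case: eqP => [->|]. Qed.

Lemma nash_of_potential_max s :
  feasible_profile G s ->
  (forall s', feasible_profile G s' -> potential G s' <= potential G s) ->
  nash G s.
Proof.
move=> fs smax; split=> // i si fsi.
have [si_uniq _ _ _] := fsi; have [s_uniq _ _ _] := fs i.
rewrite -subr_le0 -potential_upd_subr // subr_le0.
exact/smax/feasible_profile_upd.
Qed.

Lemma feasible_nil i : 0 <= budget G i -> feasible G i [::].
Proof.
move=> budget_i_ge0; split=> //; first by rewrite big_nil.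
by exists (fun=> 0); split=> [j|//|j _]; rewrite ltn0.
Qed.

Lemma size_feasible i si : feasible G i si -> (size si <= #|T|)%N.
Proof. by case=> /card_uniqP <- _ _ _; exact: max_card. Qed.

Lemma ex_potential_max : (forall i, 0 <= budget G i) ->
  exists2 s, feasible_profile G s &
    forall s', feasible_profile G s' -> potential G s' <= potential G s.
Proof.
move=> budget_ge0.
pose decode (f : {ffun U -> #|T|.-bseq T}) : profile U T := fun i => f i.
apply: (@ex_maximizer_fin_image _ R _ _ decode (feasible_profile G) (potential G)).
  by exists (fun=> [::]) => i; exact: feasible_nil.
move=> s fs; exists [ffun i => Bseq (size_feasible (fs i))].
by apply: functional_extensionality => i; rewrite /decode ffunE.
Qed.

End PotentialGame.

Theorem lemma3 (R : rcfType) (U T : finType) (G : game R U T)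
  (speed_pos : forall i, 0 < speed G i)
  (ctrav_ge0 : forall i, 0 <= ctrav G i)
  (budget_ge0 : forall i, 0 <= budget G i)
  (texec_ge0 : forall i k, k \in avail G i -> 0 <= texec G i k)
  (cexec_ge0 : forall i k, k \in avail G i -> 0 <= cexec G i k) :
  (forall sstar : profile U T,
     feasible_profile G sstar ->
     (forall s : profile U T, feasible_profile G s ->
        potential G s <= potential G sstar) ->
     nash G sstar)
  /\ (exists s : profile U T, nash G s).
Proof.
split; first exact: nash_of_potential_max.
have [s fs smax] := ex_potential_max budget_ge0.
by exists s; exact: nash_of_potential_max.
Qed.
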